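(* Let $(X,Z)\in\mathbb{R}^n\times\mathbb{R}^{n\times p}$ be any fixed design, $\mathcal{R}\subseteq[n]$ any row set, $\alpha\in(0,1)$, and let $P_{\pi\mid\mathcal{R}}$ be uniformly distributed on $\mathcal{S}_{n\mid\mathcal{R}}$. Let $D_\mathcal{R}=\|(I-H_{P_{\pi\mid\mathcal{R}}X,Z,P_{\pi\mid\mathcal{R}}Z})X\|_2^2$ with $\alpha$-quantile $F^{-1}_{D_\mathcal{R}}(\alpha;X,Z)$, and let $\mu_\mathcal{R}(Z)=E\{\mathrm{rank}(Z-P_{\pi\mid\mathcal{R}}Z)\}$. Then: (i) if $pr(X\in\mathcal{C}(Z,P_{\pi\mid\mathcal{R}}Z))\ge\alpha$, then $F^{-1}_{D_\mathcal{R}}(\alpha;X,Z)=0$; (ii) $\mu_\mathcal{R}(Z)\ge\mu_{\mathcal{R}\cup\{k\}}(Z)$ for any $k\in[n]\setminus\mathcal{R}$.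
   Context: $[n]=\{1,\dots,n\}$. $\mathcal{C}(M)$ is the column space of $M$ and $H_M$ the orthogonal projection onto it; $H_{A,B,C}$ is the projection onto the column space of $(A,B,C)$. For $\mathcal{R}\subseteq[n]$, $\mathcal{S}_{n\mid\mathcal{R}}$ is the group of $n\times n$ permutation matrices that fix every row index in $\mathcal{R}$ (diagonal entry $1$ at each $i\in\mathcal{R}$). The $\alpha$-quantile of a random variable $D$ is $F_D^{-1}(\alpha)=\inf\{x:pr(D\le x)\ge\alpha\}$. *)

From HB Require Import structures.
From mathcomp Require Import all_boot all_order all_fingroup all_algebra.
From mathcomp Require Import boolp classical_sets reals.
Set Implicit Arguments. Unset Strict Implicit. Unset Printing Implicit Defensive.
Import Order.TTheory GRing.Theory Num.Theory.
Local Open Scope ring_scope.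

Section Defs.
Context {R : realType}.

(* Orthogonal projection onto the column space C(M):
   H_M = C (C^T C)^{-1} C^T, where C = col_base M has full column rank and
   the same column space as M. *)
Definition hatmx (n q : nat) (M : 'M[R]_(n, q)) : 'M[R]_n :=
  let C := col_base M in C *m invmx (C^T *m C) *m C^T.

Definition sqnorm (n : nat) (v : 'cV[R]_n) : R := \sum_i (v i 0) ^+ 2.

(* S_{n|Rs}: permutations whose permutation matrix has diagonal entry 1 at
   every row index in Rs, i.e. s i = i for i in Rs. *)
Definition Sfix (n : nat) (Rs : {set 'I_n}) : {set 'S_n} :=
  [set s : 'S_n | [forall i in Rs, s i == i]].

Definition prU (n : nat) (Rs : {set 'I_n}) (E : pred 'S_n) : R :=
  #|[set s in Sfix Rs | E s]|%:R / #|Sfix Rs|%:R.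

Definition EU (n : nat) (Rs : {set 'I_n}) (f : 'S_n -> R) : R :=
  (\sum_(s in Sfix Rs) f s) / #|Sfix Rs|%:R.

Definition Dstat (n p : nat) (X : 'cV[R]_n) (Z : 'M[R]_(n, p)) (s : 'S_n) : R :=
  let P := perm_mx s in
  sqnorm ((1%:M - hatmx (row_mx (row_mx (P *m X) Z) (P *m Z))) *m X).

Definition quantileU (n : nat) (Rs : {set 'I_n}) (D : 'S_n -> R) (alpha : R) : R :=
  inf [set x : R | alpha <= prU Rs (fun s => D s <= x)]%classic.

Definition muR (n p : nat) (Rs : {set 'I_n}) (Z : 'M[R]_(n, p)) : R :=
  EU Rs (fun s => (\rank (Z - perm_mx s *m Z))%:R).

Definition in_colspace (n q : nat) (X : 'cV[R]_n) (M : 'M[R]_(n, q)) : bool :=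
  (X^T <= M^T)%MS.

End Defs.

From HB Require Import structures.
From mathcomp Require Import all_boot all_order all_fingroup all_algebra.
From mathcomp Require Import boolp classical_sets reals.
Import Order.TTheory GRing.Theory Num.Theory.
Local Open Scope ring_scope.
Set Implicit Arguments. Unset Strict Implicit. Unset Printing Implicit Defensive.

(* (i) The hat matrix fixes every vector of its column space, so D(P) = 0 on
   the event X in C(Z, PZ); since D >= 0, an event of probability >= alpha on
   which D vanishes forces the alpha-quantile to be 0.
   (ii) Grouping s in S_{n|R} by j = s^-1(k), the map s |-> (j, s o (j k)) is a
   bijection onto (the complement of R) x S_{n|R u {k}}.  For s fixing k, with
   P and P' the matrices of s and s o (j k), row k of Z - PZ is 0, row j is the
   sum of rows j and k of Z - P'Z, and the other rows agree; hence
   rank(Z - PZ) <= rank(Z - P'Z), and averaging gives mu_{R u {k}} <= mu_R. *)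

Section HatMatrix.
Variable R : realType.

Lemma sqnorm_ge0 n (v : 'cV[R]_n) : 0 <= sqnorm v.
Proof. by apply: sumr_ge0 => i _; apply: sqr_ge0. Qed.

Lemma sqnorm_mulmx_tr n (v : 'cV[R]_n) : (v^T *m v) 0 0 = sqnorm v.
Proof. by rewrite mxE; apply: eq_bigr => i _; rewrite mxE expr2. Qed.

Lemma sqnorm_eq0 n (v : 'cV[R]_n) : (sqnorm v == 0) = (v == 0).
Proof.
apply/idP/eqP => [|->]; last by rewrite /sqnorm big1 // => i _; rewrite mxE expr0n.
rewrite psumr_eq0 => [/allP v0|i _]; last exact: sqr_ge0.
apply/matrixP => i j; rewrite ord1 mxE.
by have /implyP/(_ isT) := v0 i (mem_index_enum i); rewrite sqrf_eq0 => /eqP.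
Qed.

Lemma row_full_gram_unit n r (C : 'M[R]_(n, r)) : row_full C -> C^T *m C \in unitmx.
Proof.
move=> fullC; rewrite -row_free_unit -kermx_eq0; apply/eqP/row_matrixP => i.
have freeCt : row_free C^T by rewrite /row_free mxrank_tr.
set u := row i (kermx (C^T *m C)); rewrite row0.
have uK : u *m (C^T *m C) = 0 by rewrite /u -row_mul mulmx_ker row0.
have /eqP : sqnorm (C *m u^T) = 0.
  by rewrite -sqnorm_mulmx_tr trmx_mul trmxK mulmxA -(mulmxA u) uK mul0mx mxE.
rewrite sqnorm_eq0 => /eqP/(congr1 trmx); rewrite trmx_mul trmxK trmx0 => Cu0.
by apply: (row_free_inj freeCt); rewrite Cu0 mul0mx.
Qed.

Lemma hatmx_colspace n q (M : 'M[R]_(n, q)) (X : 'cV[R]_n) :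
  (X^T <= M^T)%MS -> hatmx M *m X = X.
Proof.
move=> /submxP[w Xw].
have -> : X = col_base M *m (row_base M *m w^T).
  by rewrite mulmxA mulmx_base -[X]trmxK Xw trmx_mul trmxK.
rewrite /hatmx; have := col_base_full M.
move: (col_base M) (row_base M *m w^T) => C v fullC.
by rewrite -!mulmxA (mulmxA C^T) mulKmx // row_full_gram_unit.
Qed.

Lemma Dstat_eq0 n p (X : 'cV[R]_n) (Z : 'M[R]_(n, p)) (s : 'S_n) :
  in_colspace X (row_mx Z (perm_mx s *m Z)) -> Dstat X Z s = 0.
Proof.
move=> XZ; apply/eqP; rewrite sqnorm_eq0 mulmxBl mul1mx hatmx_colspace ?subrr //.
apply: submx_trans XZ _; rewrite !tr_row_mx -!addsmxE.
by apply: addsmxS => //; rewrite -addsmxE; apply: addsmxSr.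
Qed.

End HatMatrix.

Section Quantile.
Variables (R : realType) (n : nat) (Rs : {set 'I_n}).

Lemma le_prU (E E' : pred 'S_n) :
  {in Sfix Rs, forall s, E s -> E' s} -> prU Rs E <= prU Rs E' :> R.
Proof.
move=> EE'; rewrite /prU ler_wpM2r ?invr_ge0 ?ler0n // ler_nat.
apply/subset_leq_card/fintype.subsetP => s; rewrite !inE => /andP[sR Es].
by rewrite sR EE' // inE.
Qed.

Lemma prU_pred0 (E : pred 'S_n) : {in Sfix Rs, forall s, ~~ E s} -> prU Rs E = 0 :> R.
Proof.
move=> notE; apply/eqP; rewrite /prU mulf_eq0 pnatr_eq0 cards_eq0; apply/orP; left.
apply/eqP/setP => s; rewrite !inE; apply/negbTE/andP => -[sR].
by apply/negP/notE; rewrite inE.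
Qed.

Lemma quantileU_eq0 (D : 'S_n -> R) (alpha : R) : 0 < alpha ->
  (forall s, 0 <= D s) -> alpha <= prU Rs (fun s => D s == 0) ->
  quantileU Rs D alpha = 0.
Proof.
move=> alpha0 D0 alphaD; rewrite /quantileU.
set S := [set x : R | _]%classic.
have S0 : S 0 by apply: le_trans alphaD _; apply: le_prU => s _ /eqP->.
have lbS : lbound S 0.
  move=> x /= alphax; rewrite leNgt; apply: contraTN alphax => x0.
  rewrite -ltNge prU_pred0 // => s _; rewrite -ltNge.
  exact: lt_le_trans x0 (D0 s).
apply/le_anti/andP; split; first exact: ge_inf (ex_intro _ 0 lbS) _ S0.
by apply: lb_le_inf lbS; exists 0.
Qed.

End Quantile.

Section FixedRowPermutations.
Variables (n : nat) (Rs : {set 'I_n}).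

Lemma perm1_in_Sfix : (1%g : 'S_n) \in Sfix Rs.
Proof. by rewrite inE; apply/forall_inP => i _; rewrite perm1. Qed.

Lemma big_Sfix_setU1 (V : Type) (idx : V) (op : Monoid.com_law idx)
    (F : 'S_n -> V) (k : 'I_n) :
  k \notin Rs ->
  \big[op/idx]_(s in Sfix Rs) F s =
  \big[op/idx]_(j in ~: Rs) \big[op/idx]_(s in Sfix (k |: Rs)) F (tperm j k * s)%g.
Proof.
move=> kR; rewrite (partition_big (fun s : 'S_n => (s^-1)%g k) (fun j => j \in ~: Rs)).
  apply: eq_bigr => j /[!inE] jR; rewrite (reindex_inj (mulgI (tperm j k))).
  apply: eq_bigl => s; rewrite !inE -(inj_eq (@perm_inj _ (tperm j k * s)%g)).
  rewrite permKV permM tpermL eq_sym.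
  have fixR i : i \in Rs -> (tperm j k * s)%g i = s i.
    move=> iR; rewrite permM tpermD //.
      by apply: contraNneq jR => ->.
    by apply: contraNneq kR => ->.
  apply/andP/forall_inP => [[/forall_inP sR /eqP sk] i|sRk].
    rewrite !inE => /predU1P[->|iR]; first exact/eqP.
    by rewrite -fixR ?sR.
  split; last by rewrite (eqP (sRk k (setU11 k Rs))).
  by apply/forall_inP => i iR; rewrite fixR // sRk // setU1r.
move=> s; rewrite !inE => /forall_inP sR; apply: contraNN kR => s'kR.
by have := sR _ s'kR; rewrite permKV => /eqP->.
Qed.

Lemma card_Sfix_setU1 (k : 'I_n) :
  k \notin Rs -> #|Sfix Rs| = (#|~: Rs| * #|Sfix (k |: Rs)|)%N.
Proof.
move=> kR; rewrite -sum1_card (big_Sfix_setU1 _ _ kR).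
by under eq_bigr do rewrite sum1_card; rewrite sum_nat_const.
Qed.

End FixedRowPermutations.

Section ExpectedRank.
Variable R : realType.

Lemma EU_le_setU1 n (Rs : {set 'I_n}) (f : 'S_n -> R) (k : 'I_n) : k \notin Rs ->
  (forall j s, j \notin Rs -> s \in Sfix (k |: Rs) -> f s <= f (tperm j k * s)%g) ->
  EU (k |: Rs) f <= EU Rs f.
Proof.
move=> kR f_tperm; rewrite /EU (card_Sfix_setU1 kR) natrM invfM mulrA.
have card_gt0 (Rs' : {set 'I_n}) : 0 < #|Sfix Rs'|%:R :> R.
  by rewrite ltr0n; apply/card_gt0P; exists 1%g; apply: perm1_in_Sfix.
have compl_gt0 : 0 < #|~: Rs|%:R :> R.
  by rewrite ltr0n; apply/card_gt0P; exists k; rewrite inE.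
rewrite ler_pM2r ?invr_gt0 // ler_pdivlMr // mulr_natr -sumr_const.
rewrite (big_Sfix_setU1 _ _ kR); apply: ler_sum => j; rewrite inE => jR.
by apply: ler_sum => s sRk; apply: f_tperm.
Qed.

Lemma row_sub_perm_mx n p (Z : 'M[R]_(n, p)) (s : 'S_n) i :
  row i (Z - perm_mx s *m Z) = row i Z - row (s i) Z.
Proof. by rewrite -row_permE; apply/rowP => c; rewrite !mxE. Qed.

Lemma mxrank_sub_perm_mx_tperm n p (Z : 'M[R]_(n, p)) (s : 'S_n) (j k : 'I_n) :
  s k = k ->
  (\rank (Z - perm_mx s *m Z)%R <= \rank (Z - perm_mx (tperm j k * s)%g *m Z)%R)%N.
Proof.
move=> sk; have [<-|njk] := eqVneq j k; first by rewrite tperm1 mul1g.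
set Z' := (Z - perm_mx (tperm j k * s)%g *m Z)%R; apply: mxrankS; apply/row_subP => i.
have [->|nik] := eqVneq i k; first by rewrite row_sub_perm_mx sk subrr sub0mx.
have [->|nij] := eqVneq i j.
  have -> : row j (Z - perm_mx s *m Z) = row j Z' + row k Z'.
    by rewrite !row_sub_perm_mx !permM tpermL tpermR sk addrA subrK.
  by rewrite addmx_sub ?row_sub.
have tperm_i : tperm j k i = i by rewrite tpermD // eq_sym.
by rewrite row_sub_perm_mx -{2}tperm_i -permM -row_sub_perm_mx row_sub.
Qed.

Lemma muR_setU1 n p (Z : 'M[R]_(n, p)) (Rs : {set 'I_n}) (k : 'I_n) :
  k \notin Rs -> muR (k |: Rs) Z <= muR Rs Z.
Proof.
move=> kR; apply: EU_le_setU1 => // j s _; rewrite inE => /forall_inP sRk.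
by rewrite ler_nat mxrank_sub_perm_mx_tperm // (eqP (sRk k (setU11 k Rs))).
Qed.

End ExpectedRank.

Theorem proposition2 (R : realType) (n p : nat) (X : 'cV[R]_n) (Z : 'M[R]_(n, p))
    (Rs : {set 'I_n}) (alpha : R) :
  0 < alpha < 1 ->
  (alpha <= prU Rs (fun s => in_colspace X (row_mx Z (perm_mx s *m Z))) ->
     quantileU Rs (Dstat X Z) alpha = 0) /\
  (forall k : 'I_n, k \notin Rs -> muR (k |: Rs) Z <= muR Rs Z).
Proof.
move=> /andP[alpha0 _]; split=> [alpha_colspace|k]; last exact: muR_setU1.
apply: quantileU_eq0 => // [s|]; first exact: sqnorm_ge0.
by apply: le_trans alpha_colspace _; apply: le_prU => s _ /Dstat_eq0 ->.
Qed.
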